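(* Let ${\bf R}=(R_1,\dots,R_d)\in\mathbb R_+^d$, $u=\max\{R_1,\dots,R_d\}$, $v=\min\{R_1,\dots,R_d\}$, and $g({\bf R})=\frac{1}{1/R_1+\cdots+1/R_d}$. Then $v\le d\,g({\bf R})\le u$ and, for all $d\in\mathbb N_+$, $$2^v\sqrt{\frac{1}{e(d+2u)}}\le\big(\mathrm{vol}(B^d_{2{\bf R}})\big)^{g({\bf R})}\le 2^u\Big(\frac{2v+1}{2v}\Big)^{\frac{u}{2v}}\sqrt{\frac{2eu}{d}}.$$
   Context: $B^d_{2{\bf R}}=\{{\bf x}\in\mathbb R^d:\sum_{j=1}^d|x_j|^{2R_j}\le1\}$ and vol is Lebesgue measure; explicitly $\mathrm{vol}(B^d_{2{\bf R}})=2^d\frac{\Gamma(1+\frac{1}{2R_1})\cdots\Gamma(1+\frac{1}{2R_d})}{\Gamma(1+\frac{1}{2R_1}+\cdots+\frac{1}{2R_d})}$. *)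

From Stdlib Require Import Reals Lra ClassicalEpsilon.
Open Scope R_scope.

Definition gamma_integrand (x t : R) : R := Rpower t (x - 1) * exp (- t).

(* g is the value of the improper Riemann integral  int_0^oo t^(x-1) e^(-t) dt,
   i.e. the limit of int_a^b as a -> 0+ and b -> +oo. *)
Definition is_Gamma (x g : R) : Prop :=
  forall eps : R, 0 < eps ->
  exists delta M : R, 0 < delta /\ 0 < M /\
    forall (a b : R) (pr : Riemann_integrable (gamma_integrand x) a b),
      0 < a < delta -> M < b -> Rabs (RiemannInt pr - g) < eps.

(* Euler's Gamma function (meaningful for x > 0, where the limit exists and is unique). *)
Definition Gamma (x : R) : R := epsilon (inhabits 0) (fun g => is_Gamma x g).

Fixpoint rsum (n : nat) (f : nat -> R) : R :=
  match n with O => 0 | S m => rsum m f + f m end.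
Fixpoint rprod (n : nat) (f : nat -> R) : R :=
  match n with O => 1 | S m => rprod m f * f m end.

Fixpoint rmax_upto (n : nat) (f : nat -> R) : R :=
  match n with O => f O | S m => Rmax (rmax_upto m f) (f n) end.
Fixpoint rmin_upto (n : nat) (f : nat -> R) : R :=
  match n with O => f O | S m => Rmin (rmin_upto m f) (f n) end.

Definition umax (d : nat) (r : nat -> R) : R := rmax_upto (d - 1) r.
Definition vmin (d : nat) (r : nat -> R) : R := rmin_upto (d - 1) r.
Definition gR (d : nat) (r : nat -> R) : R := 1 / rsum d (fun j => 1 / r j).

(* vol(B^d_{2R}) via the explicit formula from the paper's context:
   2^d prod_j Gamma(1 + 1/(2R_j)) / Gamma(1 + sum_j 1/(2R_j)). *)
Definition volB (d : nat) (r : nat -> R) : R :=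
  2 ^ d * rprod d (fun j => Gamma (1 + 1 / (2 * r j)))
    / Gamma (1 + rsum d (fun j => 1 / (2 * r j))).

(* With a_j = 1/(2 R_j) and s = a_1 + ... + a_d = 1/(2 g(R)), the volume formula gives
   g(R) ln vol = d g(R) ln 2 + (sum_j ln Gamma(1 + a_j) - ln Gamma(1 + s)) / (2 s).
   Bounding the integrand t^a e^(-t) below by a^a e^(-t) on [a, oo) and above by
   ((1+a)/e)^a e^(-t/(1+a)) gives a ln a - a <= ln Gamma(1 + a) <= a ln (1 + a).
   Convexity of x ln x bounds sum_j a_j ln a_j below by s ln (s/d), and
   d/(2u) <= s <= d/(2v) turns the resulting estimates into the stated ones. *)

From Stdlib Require Import Reals Lra Lia ClassicalEpsilon Classical.
From Coquelicot Require Import Coquelicot.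
Open Scope R_scope.

Lemma exp_le x y : x <= y -> exp x <= exp y.
Proof. intros [Hlt | ->]; [left; apply exp_increasing | right]; auto. Qed.

Lemma ln_le_sub_1 y : 0 < y -> ln y <= y - 1.
Proof. intros Hy. pose proof (exp_ineq1_le (ln y)) as H. rewrite exp_ln in H; lra. Qed.

Lemma gamma_integrand_pos x t : 0 < gamma_integrand x t.
Proof. apply Rmult_lt_0_compat; apply exp_pos. Qed.

Lemma ex_RInt_gamma_integrand x p q : 0 < p -> 0 < q -> ex_RInt (gamma_integrand x) p q.
Proof.
  intros Hp Hq. apply (ex_RInt_continuous (V := R_CompleteNormedModule)). intros t Ht.
  assert (0 < t) by (pose proof (Rmin_glb_lt p q 0 Hp Hq); lra).
  apply (ex_derive_continuous (K := R_AbsRing) (V := R_NormedModule)).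
  unfold gamma_integrand, Rpower. auto_derive. lra.
Qed.

Lemma RInt_gamma_integrand_widen x p q p' q' :
  0 < p' <= p -> p <= q -> q <= q' ->
  RInt (gamma_integrand x) p q <= RInt (gamma_integrand x) p' q'.
Proof.
  intros Hp Hpq Hq.
  assert (Hex : forall y z, p' <= y -> p' <= z -> ex_RInt (gamma_integrand x) y z)
    by (intros; apply ex_RInt_gamma_integrand; lra).
  assert (Hnonneg : forall y z, p' <= y <= z -> 0 <= RInt (gamma_integrand x) y z).
  { intros y z Hyz. apply RInt_ge_0; [lra | apply Hex; lra |].
    intros; left; apply gamma_integrand_pos. }
  rewrite <- (RInt_Chasles (V := R_CompleteNormedModule) _ p' p q'),
    <- (RInt_Chasles (V := R_CompleteNormedModule) _ p q q') by (apply Hex; lra).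
  pose proof (Hnonneg p' p ltac:(lra)). pose proof (Hnonneg q q' ltac:(lra)).
  unfold plus; simpl. lra.
Qed.

Definition gamma_partial (x y : R) : Prop :=
  exists p q, 0 < p <= q /\ y = RInt (gamma_integrand x) p q.

(* The integrand is positive, so the improper integral is the supremum of the
   integrals over compact subintervals of (0, oo). *)
Lemma is_Gamma_lub x g : is_lub (gamma_partial x) g -> is_Gamma x g.
Proof.
  intros [Hub Hleast] eps Heps.
  assert (exists p q, 0 < p <= q /\ g - eps < RInt (gamma_integrand x) p q)
    as (p & q & Hpq & Hclose).
  { apply NNPP. intros Hfar. assert (g <= g - eps); [| lra].
    apply Hleast. intros y (p & q & Hpq & ->). apply Rnot_lt_le. intros Hlt.
    apply Hfar. now exists p, q. }
  exists p, q. split; [lra | split; [lra |]].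
  intros a b pr Ha Hb. rewrite <- RInt_Reals.
  assert (RInt (gamma_integrand x) a b <= g) by (apply Hub; exists a, b; split; [lra | auto]).
  pose proof (RInt_gamma_integrand_widen x p q a b ltac:(lra) ltac:(lra) ltac:(lra)).
  apply Rabs_def1; lra.
Qed.

Lemma is_Gamma_unique x g1 g2 : is_Gamma x g1 -> is_Gamma x g2 -> g1 = g2.
Proof.
  intros H1 H2. apply NNPP. intros Hne.
  set (eps := Rabs (g1 - g2) / 2).
  assert (Heps : 0 < eps) by (apply Rdiv_lt_0_compat; [apply Rabs_pos_lt; lra | lra]).
  destruct (H1 eps Heps) as (d1 & M1 & Hd1 & HM1 & Close1).
  destruct (H2 eps Heps) as (d2 & M2 & Hd2 & HM2 & Close2).
  set (a := Rmin d1 d2 / 2). set (b := Rmax M1 M2 + 1).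
  pose proof (Rmin_glb_lt d1 d2 0 Hd1 Hd2). pose proof (Rmin_l d1 d2). pose proof (Rmin_r d1 d2).
  pose proof (Rmax_l M1 M2). pose proof (Rmax_r M1 M2).
  assert (pr : Riemann_integrable (gamma_integrand x) a b)
    by (apply ex_RInt_Reals_0, ex_RInt_gamma_integrand; unfold a, b; lra).
  specialize (Close1 a b pr ltac:(unfold a; lra) ltac:(unfold b; lra)).
  specialize (Close2 a b pr ltac:(unfold a; lra) ltac:(unfold b; lra)).
  pose proof (Rabs_triang (g1 - RiemannInt pr) (RiemannInt pr - g2)) as Htri.
  replace (g1 - RiemannInt pr + (RiemannInt pr - g2)) with (g1 - g2) in Htri by ring.
  rewrite Rabs_minus_sym in Close1. unfold eps in *. lra.
Qed.

Lemma Gamma_lub x : bound (gamma_partial x) -> is_lub (gamma_partial x) (Gamma x).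
Proof.
  intros Hbound.
  assert (Hne : exists y, gamma_partial x y)
    by (exists (RInt (gamma_integrand x) 1 1), 1, 1; split; [lra | auto]).
  destruct (completeness _ Hbound Hne) as [g Hg].
  replace (Gamma x) with g; [exact Hg |].
  apply is_Gamma_unique with x; [now apply is_Gamma_lub |].
  unfold Gamma. apply epsilon_spec. exists g. now apply is_Gamma_lub.
Qed.

Lemma gamma_integrand_succ a t : gamma_integrand (1 + a) t = exp (a * ln t - t).
Proof. unfold gamma_integrand, Rpower. rewrite <- exp_plus. f_equal; ring. Qed.

Lemma RInt_gamma_integrand_succ_le a p q : 0 < a -> 0 < p <= q ->
  RInt (gamma_integrand (1 + a)) p q <= (1 + a) * exp (a * ln (1 + a) - a).
Proof.
  intros Ha [Hp Hpq].
  set (K := exp (a * ln (1 + a) - a)).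
  set (G := fun t => - (1 + a) * K * exp (- t / (1 + a))).
  assert (HK : 0 < K) by apply exp_pos.
  assert (Hdom : forall t, 0 < t -> gamma_integrand (1 + a) t <= K * exp (- t / (1 + a))).
  { intros t Ht. rewrite gamma_integrand_succ. unfold K. rewrite <- exp_plus. apply exp_le.
    pose proof (ln_le_sub_1 (t / (1 + a)) ltac:(apply Rdiv_lt_0_compat; lra)) as Hln.
    rewrite ln_div in Hln by lra.
    assert (Hmul : a * (ln t - ln (1 + a)) <= a * (t / (1 + a) - 1))
      by (apply Rmult_le_compat_l; lra).
    replace (a * (t / (1 + a) - 1)) with (t - a - t / (1 + a)) in Hmul by (field; lra).
    lra. }
  assert (HG : is_RInt (fun t => K * exp (- t / (1 + a))) p q (G q - G p)).
  { apply (is_RInt_derive (V := R_CompleteNormedModule) G).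
    - intros t _. unfold G. auto_derive; [easy |].
      change (- (1 + a) * K * (- (1) * / (1 + a) * exp (- t * / (1 + a)))
        = K * exp (- t * / (1 + a))).
      field. lra.
    - intros t _. apply (ex_derive_continuous (K := R_AbsRing) (V := R_NormedModule)).
      auto_derive. lra. }
  apply Rle_trans with (G q - G p).
  - rewrite <- (is_RInt_unique _ _ _ _ HG).
    apply RInt_le; [lra | apply ex_RInt_gamma_integrand; lra | eexists; exact HG |].
    intros t Ht. apply Hdom. lra.
  - assert (Hq : 0 < exp (- q / (1 + a))) by apply exp_pos.
    assert (Hp1 : exp (- p / (1 + a)) <= 1).
    { rewrite <- exp_0 at 2. apply exp_le.
      assert (0 < p / (1 + a)) by (apply Rdiv_lt_0_compat; lra).
      replace (- p / (1 + a)) with (- (p / (1 + a))) by (field; lra). lra. }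
    assert (Hm : 0 < (1 + a) * K) by (apply Rmult_lt_0_compat; lra).
    pose proof (Rmult_lt_0_compat _ _ Hm Hq).
    pose proof (Rmult_le_compat_l _ _ _ (Rlt_le _ _ Hm) Hp1).
    unfold G. lra.
Qed.

Lemma RInt_gamma_integrand_succ_ge a q : 0 < a < q ->
  exp (a * ln a) * (exp (- a) - exp (- q)) <= RInt (gamma_integrand (1 + a)) a q.
Proof.
  intros [Ha Haq].
  set (C := exp (a * ln a)).
  set (G := fun t => - C * exp (- t)).
  assert (HG : is_RInt (fun t => C * exp (- t)) a q (G q - G a)).
  { apply (is_RInt_derive (V := R_CompleteNormedModule) G).
    - intros t _. unfold G. auto_derive; [easy | ring].
    - intros t _. apply (ex_derive_continuous (K := R_AbsRing) (V := R_NormedModule)).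
      auto_derive. easy. }
  replace (C * (exp (- a) - exp (- q))) with (G q - G a) by (unfold G; ring).
  rewrite <- (is_RInt_unique _ _ _ _ HG).
  apply RInt_le; [lra | eexists; exact HG | apply ex_RInt_gamma_integrand; lra |].
  intros t Ht. rewrite gamma_integrand_succ, Rminus_def, exp_plus.
  apply Rmult_le_compat_r; [left; apply exp_pos |].
  apply exp_le, Rmult_le_compat_l; [lra |]. apply ln_le; lra.
Qed.

Lemma bound_gamma_partial_succ a : 0 < a -> bound (gamma_partial (1 + a)).
Proof.
  intros Ha. exists ((1 + a) * exp (a * ln (1 + a) - a)).
  intros y (p & q & Hpq & ->). now apply RInt_gamma_integrand_succ_le.
Qed.

Lemma Gamma_succ_ge a : 0 < a -> exp (a * ln a - a) <= Gamma (1 + a).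
Proof.
  intros Ha. destruct (Gamma_lub _ (bound_gamma_partial_succ a Ha)) as [Hub _].
  apply Rle_plus_epsilon. intros eps Heps.
  set (C := exp (a * ln a)).
  assert (HC : 0 < C) by apply exp_pos.
  set (q := a + C / eps + 1).
  assert (Hq : a < q) by (assert (0 < C / eps) by (apply Rdiv_lt_0_compat; lra); unfold q; lra).
  assert (Htail : C * exp (- q) < eps).
  { rewrite exp_Ropp. pose proof (exp_ineq1_le q). pose proof (exp_pos q).
    apply (Rmult_lt_reg_r (exp q)); [lra |].
    replace (C * / exp q * exp q) with C by (field; lra).
    apply Rlt_le_trans with (eps * (1 + q)); [| apply Rmult_le_compat_l; lra].
    replace C with (eps * (C / eps)) at 1 by (field; lra).
    apply Rmult_lt_compat_l; [lra |]. unfold q. lra. }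
  assert (Hint : RInt (gamma_integrand (1 + a)) a q <= Gamma (1 + a))
    by (apply Hub; exists a, q; split; [lra | auto]).
  pose proof (RInt_gamma_integrand_succ_ge a q (conj Ha Hq)) as Hhead. fold C in Hhead.
  replace (exp (a * ln a - a)) with (C * (exp (- a) - exp (- q)) + C * exp (- q))
    by (unfold C; replace (a * ln a - a) with (a * ln a + - a) by ring; rewrite exp_plus; ring).
  lra.
Qed.

Lemma Gamma_succ_pos a : 0 < a -> 0 < Gamma (1 + a).
Proof. intros Ha. apply Rlt_le_trans with (2 := Gamma_succ_ge a Ha), exp_pos. Qed.

Lemma ln_Gamma_succ_ge a : 0 < a -> a * ln a - a <= ln (Gamma (1 + a)).
Proof.
  intros Ha. rewrite <- (ln_exp (a * ln a - a)).
  apply ln_le; [apply exp_pos | now apply Gamma_succ_ge].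
Qed.

Lemma ln_Gamma_succ_le a : 0 < a -> ln (Gamma (1 + a)) <= a * ln (1 + a).
Proof.
  intros Ha. destruct (Gamma_lub _ (bound_gamma_partial_succ a Ha)) as [_ Hleast].
  assert (Hle : Gamma (1 + a) <= (1 + a) * exp (a * ln (1 + a) - a)).
  { apply Hleast. intros y (p & q & Hpq & ->). now apply RInt_gamma_integrand_succ_le. }
  apply ln_le in Hle; [| now apply Gamma_succ_pos].
  rewrite ln_mult, ln_exp in Hle by (lra || apply exp_pos).
  pose proof (ln_le_sub_1 (1 + a) ltac:(lra)). lra.
Qed.

Lemma rsum_le n f g : (forall j, (j < n)%nat -> f j <= g j) -> rsum n f <= rsum n g.
Proof.
  induction n as [| n IH]; simpl; intros Hfg; [lra |].
  pose proof (Hfg n ltac:(lia)). pose proof (IH ltac:(intros j Hj; apply Hfg; lia)). lra.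
Qed.

Lemma rsum_ext n f g : (forall j, (j < n)%nat -> f j = g j) -> rsum n f = rsum n g.
Proof.
  intros Hfg. apply Rle_antisym; apply rsum_le; intros j Hj; rewrite Hfg by exact Hj; lra.
Qed.

Lemma rsum_scal n c f : rsum n (fun j => c * f j) = c * rsum n f.
Proof. induction n as [| n IH]; simpl; [ring | rewrite IH; ring]. Qed.

Lemma rsum_plus n f g : rsum n (fun j => f j + g j) = rsum n f + rsum n g.
Proof. induction n as [| n IH]; simpl; [ring | rewrite IH; ring]. Qed.

Lemma rsum_const n c : rsum n (fun _ => c) = INR n * c.
Proof. induction n as [| n IH]; simpl rsum; [simpl; ring | rewrite IH, S_INR; ring]. Qed.

Lemma rsum_pos n f : (0 < n)%nat -> (forall j, (j < n)%nat -> 0 < f j) -> 0 < rsum n f.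
Proof.
  destruct n as [| n]; simpl; intros Hn Hf; [lia |].
  pose proof (Hf n ltac:(lia)).
  assert (0 <= rsum n f) by (rewrite <- (Rmult_0_r (INR n)), <- rsum_const;
    apply rsum_le; intros j Hj; left; apply Hf; lia).
  lra.
Qed.

Lemma ln_rprod n f : (forall j, (j < n)%nat -> 0 < f j) ->
  0 < rprod n f /\ ln (rprod n f) = rsum n (fun j => ln (f j)).
Proof.
  induction n as [| n IH]; simpl; intros Hf; [rewrite ln_1; lra |].
  destruct IH as [Hpos Hln]; [intros j Hj; apply Hf; lia |].
  pose proof (Hf n ltac:(lia)).
  split; [now apply Rmult_lt_0_compat | rewrite ln_mult, Hln; auto].
Qed.

Lemma rmin_upto_le n f j : (j <= n)%nat -> rmin_upto n f <= f j.
Proof.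
  induction n as [| n IH]; simpl; intros Hj; [replace j with O by lia; lra |].
  destruct (Nat.eq_dec j (S n)) as [-> | Hne]; [apply Rmin_r |].
  eapply Rle_trans; [apply Rmin_l | apply IH; lia].
Qed.

Lemma rmax_upto_ge n f j : (j <= n)%nat -> f j <= rmax_upto n f.
Proof.
  induction n as [| n IH]; simpl; intros Hj; [replace j with O by lia; lra |].
  destruct (Nat.eq_dec j (S n)) as [-> | Hne]; [apply Rmax_r |].
  eapply Rle_trans; [apply IH; lia | apply Rmax_l].
Qed.

Lemma rmin_upto_attained n f : exists j, (j <= n)%nat /\ rmin_upto n f = f j.
Proof.
  induction n as [| n [j [Hj Hmin]]]; simpl; [now exists O |].
  unfold Rmin. destruct Rle_dec; [exists j | exists (S n)]; split; auto; lia.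
Qed.

Lemma xlnx_ge_tangent x c : 0 < x -> 0 < c -> x * ln c + x - c <= x * ln x.
Proof.
  intros Hx Hc. pose proof (ln_le_sub_1 (c / x) ltac:(now apply Rdiv_lt_0_compat)) as Hln.
  rewrite ln_div in Hln by lra.
  assert (Hmul : x * (ln c - ln x) <= x * (c / x - 1)) by (apply Rmult_le_compat_l; lra).
  replace (x * (c / x - 1)) with (c - x) in Hmul by (field; lra). lra.
Qed.

Lemma rsum_xlnx_ge n a : (0 < n)%nat -> (forall j, (j < n)%nat -> 0 < a j) ->
  rsum n a * (ln (rsum n a) - ln (INR n)) <= rsum n (fun j => a j * ln (a j)).
Proof.
  intros Hn Ha. set (s := rsum n a).
  assert (Hs : 0 < s) by now apply rsum_pos.
  assert (HINR : 0 < INR n) by now apply lt_0_INR.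
  apply Rle_trans with (rsum n (fun j => a j * ln (s / INR n) + a j - s / INR n)).
  - rewrite (rsum_ext n _ (fun j => ln (s / INR n) * a j + (a j + - (s / INR n))))
      by (intros; ring).
    rewrite !rsum_plus, rsum_scal, rsum_const, ln_div by lra. fold s. right; field; lra.
  - apply rsum_le. intros j Hj.
    apply xlnx_ge_tangent; [now apply Ha | now apply Rdiv_lt_0_compat].
Qed.

Section GammaSums.
Variables (n : nat) (a : nat -> R).
Hypothesis n_pos : (0 < n)%nat.
Hypothesis a_pos : forall j, (j < n)%nat -> 0 < a j.

Let s := rsum n a.
Let L := rsum n (fun j => ln (Gamma (1 + a j))).

Lemma sum_ln_Gamma_succ_ge :
  s * (ln s - ln (INR n) - 1 - ln (1 + s)) <= L - ln (Gamma (1 + s)).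
Proof.
  assert (Hs : 0 < s) by now apply rsum_pos.
  assert (HL : rsum n (fun j => a j * ln (a j)) - s <= L).
  { replace (rsum n (fun j => a j * ln (a j)) - s)
      with (rsum n (fun j => a j * ln (a j) - a j)).
    - apply rsum_le. intros j Hj. now apply ln_Gamma_succ_ge, a_pos.
    - rewrite (rsum_ext n _ (fun j => a j * ln (a j) + (-1) * a j)) by (intros; ring).
      rewrite rsum_plus, rsum_scal. fold s. ring. }
  pose proof (rsum_xlnx_ge n a n_pos a_pos) as Hconv. fold s in Hconv.
  pose proof (ln_Gamma_succ_le s Hs). lra.
Qed.

Lemma sum_ln_Gamma_succ_le c : (forall j, (j < n)%nat -> a j <= c) ->
  L - ln (Gamma (1 + s)) <= s * (ln (1 + c) - ln s + 1).
Proof.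
  intros Hc.
  assert (Hs : 0 < s) by now apply rsum_pos.
  assert (HL : L <= s * ln (1 + c)).
  { unfold s. rewrite Rmult_comm, <- rsum_scal. apply rsum_le. intros j Hj.
    pose proof (a_pos j Hj). pose proof (Hc j Hj).
    eapply Rle_trans; [now apply ln_Gamma_succ_le |].
    rewrite (Rmult_comm (ln (1 + c))). apply Rmult_le_compat_l; [lra |]. apply ln_le; lra. }
  pose proof (ln_Gamma_succ_ge s Hs). lra.
Qed.

End GammaSums.

Section Ball.
Variables (d : nat) (r : nat -> R).
Hypothesis d_pos : (1 <= d)%nat.
Hypothesis r_pos : forall j, (j < d)%nat -> 0 < r j.

Let u := umax d r.
Let v := vmin d r.
Let a (j : nat) := 1 / (2 * r j).
Let s := rsum d a.
Let L := rsum d (fun j => ln (Gamma (1 + a j))).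

Lemma vmin_le j : (j < d)%nat -> v <= r j.
Proof. intros Hj. apply rmin_upto_le. lia. Qed.

Lemma umax_ge j : (j < d)%nat -> r j <= u.
Proof. intros Hj. apply rmax_upto_ge. lia. Qed.

Lemma vmin_pos : 0 < v.
Proof.
  destruct (rmin_upto_attained (d - 1) r) as (j & Hj & Hmin).
  unfold v, vmin. rewrite Hmin. apply r_pos. lia.
Qed.

Lemma vmin_le_umax : v <= u.
Proof. apply Rle_trans with (r O); [apply vmin_le | apply umax_ge]; lia. Qed.

Lemma half_inv_pos j : (j < d)%nat -> 0 < a j.
Proof. intros Hj. pose proof (r_pos j Hj). unfold a. apply Rdiv_lt_0_compat; lra. Qed.

Lemma half_inv_le j : (j < d)%nat -> a j <= 1 / (2 * v).
Proof.
  intros Hj. pose proof vmin_pos. pose proof (vmin_le j Hj).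
  unfold a, Rdiv. rewrite !Rmult_1_l. apply Rinv_le_contravar; lra.
Qed.

Lemma half_inv_ge j : (j < d)%nat -> 1 / (2 * u) <= a j.
Proof.
  intros Hj. pose proof (r_pos j Hj). pose proof (umax_ge j Hj).
  unfold a, Rdiv. rewrite !Rmult_1_l. apply Rinv_le_contravar; lra.
Qed.

Lemma rsum_half_inv_bounds : 2 * v * s <= INR d <= 2 * u * s.
Proof.
  pose proof vmin_pos. pose proof vmin_le_umax.
  assert (Hlo : INR d * (1 / (2 * u)) <= s)
    by (rewrite <- rsum_const; apply rsum_le, half_inv_ge).
  assert (Hhi : s <= INR d * (1 / (2 * v)))
    by (rewrite <- rsum_const; apply rsum_le, half_inv_le).
  split.
  - apply Rmult_le_compat_l with (r := 2 * v) in Hhi; [| lra].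
    replace (2 * v * (INR d * (1 / (2 * v)))) with (INR d) in Hhi by (field; lra). lra.
  - apply Rmult_le_compat_l with (r := 2 * u) in Hlo; [| lra].
    replace (2 * u * (INR d * (1 / (2 * u)))) with (INR d) in Hlo by (field; lra). lra.
Qed.

Lemma rsum_half_inv_pos : 0 < s.
Proof. apply rsum_pos; [lia | exact half_inv_pos]. Qed.

Lemma gR_eq : gR d r = / (2 * s).
Proof.
  pose proof rsum_half_inv_pos.
  unfold gR. replace (rsum d (fun j => 1 / r j)) with (2 * s); [field; lra |].
  unfold s. rewrite <- rsum_scal. apply rsum_ext. intros j Hj.
  pose proof (r_pos j Hj). unfold a. field. lra.
Qed.

Lemma gR_bounds : v <= INR d * gR d r <= u.
Proof.
  pose proof rsum_half_inv_pos. pose proof rsum_half_inv_bounds.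
  rewrite gR_eq.
  change (INR d * / (2 * s)) with (INR d / (2 * s)).
  split; [apply Rle_div_r | apply Rle_div_l]; lra.
Qed.

Lemma gR_ln_volB :
  gR d r * ln (volB d r) = INR d * gR d r * ln 2 + (L - ln (Gamma (1 + s))) / (2 * s).
Proof.
  pose proof rsum_half_inv_pos.
  destruct (ln_rprod d (fun j => Gamma (1 + a j))) as [Hprod Hln_prod].
  { intros j Hj. now apply Gamma_succ_pos, half_inv_pos. }
  pose proof (Gamma_succ_pos s ltac:(lra)).
  pose proof (pow_lt 2 d ltac:(lra)).
  change (volB d r) with (2 ^ d * rprod d (fun j => Gamma (1 + a j)) / Gamma (1 + s)).
  rewrite ln_div, ln_mult, ln_pow, Hln_prod, gR_eq by (lra || now apply Rmult_lt_0_compat).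
  fold L. field. lra.
Qed.

Lemma ln_volB_ge :
  v * ln 2 + ln (1 / (exp 1 * (INR d + 2 * u))) / 2 <= gR d r * ln (volB d r).
Proof.
  pose proof rsum_half_inv_pos. pose proof rsum_half_inv_bounds. pose proof gR_bounds.
  pose proof vmin_pos. pose proof vmin_le_umax. pose proof ln_lt_2. pose proof (exp_pos 1).
  assert (HINR : 0 < INR d) by (apply lt_0_INR; lia).
  pose proof (sum_ln_Gamma_succ_ge d a ltac:(lia) half_inv_pos) as HL. fold s L in HL.
  assert (Hdiv : (ln s - ln (INR d) - 1 - ln (1 + s)) / 2
                 <= (L - ln (Gamma (1 + s))) / (2 * s)).
  { apply Rmult_le_reg_r with (2 * s); [lra |].
    replace ((L - ln (Gamma (1 + s))) / (2 * s) * (2 * s)) with (L - ln (Gamma (1 + s)))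
      by (field; lra).
    replace ((ln s - ln (INR d) - 1 - ln (1 + s)) / 2 * (2 * s))
      with (s * (ln s - ln (INR d) - 1 - ln (1 + s))) by field. exact HL. }
  assert (Hcmp : ln (INR d) + ln (1 + s) <= ln s + ln (INR d + 2 * u)).
  { rewrite <- !ln_mult by lra. apply ln_le; nra. }
  assert (Hln2 : v * ln 2 <= INR d * gR d r * ln 2) by (apply Rmult_le_compat_r; lra).
  rewrite gR_ln_volB, ln_div, ln_1, ln_mult, ln_exp by nra. lra.
Qed.

Lemma ln_volB_le :
  gR d r * ln (volB d r)
  <= u * ln 2 + u / (2 * v) * ln ((2 * v + 1) / (2 * v)) + ln (2 * exp 1 * u / INR d) / 2.
Proof.
  pose proof rsum_half_inv_pos. pose proof rsum_half_inv_bounds. pose proof gR_bounds.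
  pose proof vmin_pos. pose proof vmin_le_umax. pose proof ln_lt_2. pose proof (exp_pos 1).
  assert (HINR : 0 < INR d) by (apply lt_0_INR; lia).
  set (lam := ln ((2 * v + 1) / (2 * v))).
  assert (Hlam : lam = ln (1 + 1 / (2 * v))) by (unfold lam; f_equal; field; lra).
  assert (Hlam_pos : 0 <= lam).
  { rewrite Hlam, <- ln_1. apply ln_le; [lra |].
    assert (0 < 1 / (2 * v)) by (apply Rdiv_lt_0_compat; lra). lra. }
  pose proof (sum_ln_Gamma_succ_le d a ltac:(lia) half_inv_pos _ half_inv_le) as HL.
  fold s L in HL. rewrite <- Hlam in HL.
  assert (Hdiv : (L - ln (Gamma (1 + s))) / (2 * s) <= (lam - ln s + 1) / 2).
  { apply Rmult_le_reg_r with (2 * s); [lra |].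
    replace ((L - ln (Gamma (1 + s))) / (2 * s) * (2 * s)) with (L - ln (Gamma (1 + s)))
      by (field; lra).
    replace ((lam - ln s + 1) / 2 * (2 * s)) with (s * (lam - ln s + 1)) by field. exact HL. }
  assert (Hlam_u : lam / 2 <= u / (2 * v) * lam).
  { apply Rmult_le_reg_r with (2 * v); [lra |].
    replace (u / (2 * v) * lam * (2 * v)) with (u * lam) by (field; lra).
    replace (lam / 2 * (2 * v)) with (v * lam) by field.
    apply Rmult_le_compat_r; lra. }
  assert (Hcmp : ln (INR d) <= ln 2 + ln u + ln s).
  { rewrite <- !ln_mult by lra. apply ln_le; lra. }
  assert (Hln2 : INR d * gR d r * ln 2 <= u * ln 2) by (apply Rmult_le_compat_r; lra).
  rewrite gR_ln_volB, ln_div, !ln_mult, ln_exp by nra. lra.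
Qed.
End Ball.

Lemma sqrt_exp_ln x : 0 < x -> sqrt x = exp (ln x / 2).
Proof. intros Hx. rewrite <- Rpower_sqrt by exact Hx. unfold Rpower, Rdiv. f_equal; ring. Qed.

Theorem lemma3p4 (d : nat) (r : nat -> R) :
  (1 <= d)%nat ->
  (forall j : nat, (j < d)%nat -> 0 < r j) ->
  (vmin d r <= INR d * gR d r <= umax d r) /\
  (Rpower 2 (vmin d r) * sqrt (1 / (exp 1 * (INR d + 2 * umax d r)))
     <= Rpower (volB d r) (gR d r)
   <= Rpower 2 (umax d r)
      * Rpower ((2 * vmin d r + 1) / (2 * vmin d r)) (umax d r / (2 * vmin d r))
      * sqrt (2 * exp 1 * umax d r / INR d)).
Proof.
  intros Hd Hr. split; [now apply gR_bounds |].
  pose proof (vmin_pos d r Hd Hr). pose proof (vmin_le_umax d r Hd). pose proof (exp_pos 1).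
  assert (HINR : 0 < INR d) by (apply lt_0_INR; lia).
  rewrite !sqrt_exp_ln by (apply Rdiv_lt_0_compat; nra).
  unfold Rpower. rewrite <- !exp_plus.
  pose proof (ln_volB_ge d r Hd Hr). pose proof (ln_volB_le d r Hd Hr).
  split; apply exp_le; lra.
Qed.
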